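(* Let $b_0:[t_0,T]\to\mathbb{R}$ and $b=(b_1,b_2,b_3):[t_0,T]\to\mathbb{R}^3$ be continuous and $H(t)=b_0(t)\mathbb{I}+b(t)\cdot\sigma$. Let $q(t)=(u_0(t),\tilde u_1(t),\tilde u_2(t),\tilde u_3(t))$ be the solution of the linear Cauchy problem $\dot q'(t)=A(t)q'(t)$, $q(t_0)=(1,0,0,0)$, where $q'$ is the column vector of $q$ and $$A(t)=\begin{pmatrix}0&b_1&b_2&b_3\\-b_1&0&-b_3&b_2\\-b_2&b_3&0&-b_1\\-b_3&-b_2&b_1&0\end{pmatrix}(t),$$ equivalently $\dot u_0=b\cdot\tilde u$, $\dot{\tilde u}=-u_0 b+b\times\tilde u$. Then $q(t)$ is real with $u_0(t)^2+\|\tilde u(t)\|^2=1$ for all $t$, and $$U_H(t,t_0)=\exp\Bigl\{-i\int_{t_0}^tb_0(\tau)d\tau\Bigr\}\bigl(u_0(t)\,\mathbb{I}+i\,\tilde u(t)\cdot\sigma\bigr),\qquad t\in[t_0,T].$$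
   Context: $\sigma=(\sigma_1,\sigma_2,\sigma_3)$ are the Pauli matrices $\sigma_1=\begin{pmatrix}0&1\\1&0\end{pmatrix}$, $\sigma_2=\begin{pmatrix}0&-i\\i&0\end{pmatrix}$, $\sigma_3=\begin{pmatrix}1&0\\0&-1\end{pmatrix}$; $v\cdot\sigma=\sum_jv_j\sigma_j$; $\times$ is the vector product on $\mathbb{R}^3$. $U_H(t,t_0)$ is the solution of $i\frac{d}{dt}U_H(t,t_0)=H(t)U_H(t,t_0)$, $U_H(t_0,t_0)=\mathbb{I}$ on $\mathbb{C}^2$. *)

From Stdlib Require Import Reals.
From Coquelicot Require Import Coquelicot.
Open Scope R_scope.

Inductive idx2 := I1 | I2.

Definition M2 := idx2 -> idx2 -> C.

Definition mmul2 (A B : M2) : M2 :=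
  fun i j => (A i I1 * B I1 j + A i I2 * B I2 j)%C.

Definition madd2 (A B : M2) : M2 := fun i j => (A i j + B i j)%C.
Definition mscal2 (c : C) (A : M2) : M2 := fun i j => (c * A i j)%C.

Definition Id2 : M2 := fun i j =>
  match i, j with I1, I1 | I2, I2 => 1%C | _, _ => 0%C end.

Definition sigma1 : M2 := fun i j =>
  match i, j with I1, I2 | I2, I1 => 1%C | _, _ => 0%C end.
Definition sigma2 : M2 := fun i j =>
  match i, j with I1, I2 => (- Ci)%C | I2, I1 => Ci | _, _ => 0%C end.
Definition sigma3 : M2 := fun i j =>
  match i, j with I1, I1 => 1%C | I2, I2 => (-1)%C | _, _ => 0%C end.

Definition dot_sigma (v1 v2 v3 : C) : M2 :=
  madd2 (mscal2 v1 sigma1) (madd2 (mscal2 v2 sigma2) (mscal2 v3 sigma3)).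

Definition Ham (b0 b1 b2 b3 : R -> R) (t : R) : M2 :=
  madd2 (mscal2 (RtoC (b0 t)) Id2)
        (dot_sigma (RtoC (b1 t)) (RtoC (b2 t)) (RtoC (b3 t))).

Definition cexpi (theta : R) : C := (cos theta, sin theta).

Definition cont_within {V : UniformSpace} (t0 T : R) (f : R -> V) (x : R) : Prop :=
  filterlim f (within (fun s => t0 <= s <= T) (locally x)) (locally (f x)).

(* U solves  i dU/dt = H(t) U,  U(t0) = I  on [t0,T]:
   U is continuous on [t0,T] (relative topology), differentiable on (t0,T)
   with  dU/dt = -i H U  there, and U(t0) = I. *)
Definition is_propagator (H : R -> M2) (t0 T : R) (U : R -> M2) : Prop :=
  (forall t, t0 <= t <= T -> forall i j, cont_within t0 T (fun s => U s i j) t) /\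
  (forall t, t0 < t < T -> forall i j,
      is_derive (fun s => U s i j) t ((- Ci) * mmul2 (H t) (U t) i j)%C) /\
  (forall i j, U t0 i j = Id2 i j).

From Stdlib Require Import Reals Lra.
From Coquelicot Require Import Coquelicot.
Open Scope R_scope.

(* Write W(t) = u0(t) I + i u~(t).sigma and UF(t) = exp(-i int_{t0}^t b0) W(t).
   The proof has three independent parts.
   1. Unit quaternion: the matrix A(t) of the system for q is real and
      antisymmetric, so Re q and Im q solve the same real system x' = A x, along
      which |x|^2 is constant; hence |Im q|^2 = 0 and |Re q|^2 = 1.
   2. UF is a propagator: the quaternion system says exactly W' = -i (b.sigma) W,
      the scalar phase contributes the term -i b0, so UF' = -i H UF; UF(t0) = I.
   3. Uniqueness: H(t) is Hermitian, so every column of the difference of two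
      solutions of i U' = H U keeps a constant Euclidean norm, which is 0 at t0.
   Both norm-conservation arguments rest on one fact: a sum of squares of real
   functions with x.x' = 0 is constant (mean value theorem).  Continuity is only
   assumed relative to [t0,T]; composing with the clamping retraction of R onto
   [t0,T] turns such functions into globally continuous ones. *)

Definition clamp (a b s : R) : R := Rmax a (Rmin b s).

Lemma clamp_id a b s : a <= s <= b -> clamp a b s = s.
Proof. intros H; unfold clamp, Rmax, Rmin; repeat destruct Rle_dec; lra. Qed.

Lemma clamp_in a b s : a <= b -> a <= clamp a b s <= b.
Proof. intros H; unfold clamp, Rmax, Rmin; repeat destruct Rle_dec; lra. Qed.

Lemma clamp_continuous a b y : a <= b -> continuous (clamp a b) y.
Proof.
  intros Hab. apply filterlim_locally. intros eps. exists eps. intros s Hs.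
  change (Rabs (s - y) < eps) in Hs. change (Rabs (clamp a b s - clamp a b y) < eps).
  revert Hs; unfold clamp, Rmax, Rmin, Rabs.
  repeat destruct Rle_dec; repeat destruct Rcase_abs; lra.
Qed.

Lemma locally_interior a b x (P : R -> Prop) :
  a < x < b -> (forall s, a <= s <= b -> P s) -> locally x P.
Proof.
  intros Hx HP.
  assert (Hr : 0 < Rmin (x - a) (b - x)) by (apply Rmin_pos; lra).
  exists (mkposreal _ Hr). intros s Hs. change (Rabs (s - x) < Rmin (x - a) (b - x)) in Hs.
  apply HP. pose proof (Rmin_l (x - a) (b - x)). pose proof (Rmin_r (x - a) (b - x)).
  revert Hs; unfold Rabs; destruct Rcase_abs; lra.
Qed.

Definition cont_on {V : UniformSpace} (a b : R) (f : R -> V) : Prop :=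
  forall t, a <= t <= b -> cont_within a b f t.

Lemma cont_on_of_continuous {V : UniformSpace} a b (f g : R -> V) :
  (forall y, continuous g y) -> (forall s, a <= s <= b -> f s = g s) -> cont_on a b f.
Proof.
  intros Hg Hfg t Ht P HP. rewrite (Hfg t Ht) in HP.
  specialize (Hg t P HP). unfold filtermap in *. unfold within.
  eapply filter_imp; [|exact Hg]. intros s Hs Hin. rewrite Hfg; auto.
Qed.

Lemma cont_on_clamp_iff {V : UniformSpace} a b (f : R -> V) : a <= b ->
  cont_on a b f <-> forall y, continuous (fun s => f (clamp a b s)) y.
Proof.
  intros Hab; split.
  - intros Hf y P HP.
    specialize (Hf (clamp a b y) (clamp_in a b y Hab) P HP).
    pose proof (clamp_continuous a b y Hab _ Hf) as Hc.
    unfold filtermap in Hc |- *.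
    eapply filter_imp; [|exact Hc]. intros s Hs. apply Hs, clamp_in, Hab.
  - intros Hc. apply (cont_on_of_continuous a b f (fun s => f (clamp a b s))); auto.
    intros s Hs; rewrite clamp_id; auto.
Qed.

Lemma cont_on_lift1 {U V : UniformSpace} a b (h : U -> V) (f : R -> U) :
  (forall (f' : R -> U) y, continuous f' y -> continuous (fun s => h (f' s)) y) ->
  cont_on a b f -> cont_on a b (fun s => h (f s)).
Proof.
  intros Hh Hf. destruct (Rle_or_lt a b) as [Hab|Hba]; [|intros t Ht; lra].
  rewrite (cont_on_clamp_iff a b f Hab) in Hf. apply cont_on_clamp_iff; [exact Hab|].
  intros y; apply (Hh (fun s => f (clamp a b s))), Hf.
Qed.

Lemma cont_on_lift2 {U V W : UniformSpace} a b (h : U -> V -> W) (f : R -> U) (g : R -> V) :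
  (forall (f' : R -> U) (g' : R -> V) y,
     continuous f' y -> continuous g' y -> continuous (fun s => h (f' s) (g' s)) y) ->
  cont_on a b f -> cont_on a b g -> cont_on a b (fun s => h (f s) (g s)).
Proof.
  intros Hh Hf Hg. destruct (Rle_or_lt a b) as [Hab|Hba]; [|intros t Ht; lra].
  rewrite (cont_on_clamp_iff a b f Hab) in Hf. rewrite (cont_on_clamp_iff a b g Hab) in Hg.
  apply cont_on_clamp_iff; [exact Hab|].
  intros y; apply (Hh (fun s => f (clamp a b s)) (fun s => g (clamp a b s))); auto.
Qed.

Lemma cont_on_const {V : UniformSpace} a b (c : V) : cont_on a b (fun _ => c).
Proof.
  destruct (Rle_or_lt a b) as [Hab|Hba]; [|intros t Ht; lra].
  apply cont_on_clamp_iff; auto. intros y; apply continuous_const.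
Qed.

Lemma continuous_C_iff (f : R -> C) y :
  continuous f y <-> continuous (fun s => fst (f s)) y /\ continuous (fun s => snd (f s)) y.
Proof.
  unfold continuous. rewrite !filterlim_locally. split.
  - intros H; split; intros eps;
      (eapply filter_imp; [| exact (H eps)]); intros s [H1 H2]; assumption.
  - intros [H1 H2] eps.
    eapply filter_imp; [| exact (filter_and _ _ (H1 eps) (H2 eps))].
    intros s [A B]; split; assumption.
Qed.

Lemma is_derive_C_iff (f : R -> C) t (l : C) :
  is_derive f t l <->
  is_derive (fun s => fst (f s)) t (fst l) /\ is_derive (fun s => snd (f s)) t (snd l).
Proof.
  unfold is_derive. split.
  - intros H; split; eapply filterdiff_ext_lin;
      [ apply (filterdiff_comp' f fst); [exact H|]; apply filterdiff_linear;
        apply (@is_linear_fst R_AbsRing R_NormedModule R_NormedModule)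
      | intros y; reflexivity
      | apply (filterdiff_comp' f snd); [exact H|]; apply filterdiff_linear;
        apply (@is_linear_snd R_AbsRing R_NormedModule R_NormedModule)
      | intros y; reflexivity ].
  - intros [H1 H2].
    assert (Hpair : @filterdiff R_AbsRing
                (prod_NormedModule R_AbsRing R_NormedModule R_NormedModule)
                (prod_NormedModule R_AbsRing R_NormedModule R_NormedModule)
                (fun p => (fst p, snd p)) (locally (fst (f t), snd (f t)))
                (fun p => (fst p, snd p))).
    { apply filterdiff_linear, is_linear_prod; [apply is_linear_fst | apply is_linear_snd]. }
    pose proof (filterdiff_comp'_2 (fun s => fst (f s)) (fun s => snd (f s))
                  (fun a b => (a, b)) t _ _ (fun a b => (a, b)) H1 H2 Hpair) as Hf.
    eapply filterdiff_ext_lin; [eapply filterdiff_ext; [|exact Hf]|].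
    + intros y; simpl; destruct (f y); reflexivity.
    + intros y; simpl; destruct l; reflexivity.
Qed.

Lemma is_derive_part (p : C -> R) (f : R -> C) t l :
  p = fst \/ p = snd -> is_derive f t l -> is_derive (fun s => p (f s)) t (p l).
Proof. intros [-> | ->] Hf; apply is_derive_C_iff in Hf; tauto. Qed.

Lemma cont_on_part (p : C -> R) a b (f : R -> C) :
  p = fst \/ p = snd -> cont_on a b f -> cont_on a b (fun s => p (f s)).
Proof.
  intros Hp. apply cont_on_lift1. intros f' y Hf'.
  apply continuous_C_iff in Hf'. destruct Hp as [-> | ->]; tauto.
Qed.

Lemma is_derive_eq {V : NormedModule R_AbsRing} (f : R -> V) t l l' :
  is_derive f t l -> l = l' -> is_derive f t l'.
Proof. intros H <-; exact H. Qed.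

(* Sum and product rules stated for R-valued functions (so that they apply to
   Rplus and Rmult directly), and the product rule for C-valued functions. *)
Lemma is_derive_Rmult (f g : R -> R) t a b :
  is_derive f t a -> is_derive g t b ->
  is_derive (fun s => f s * g s) t (a * g t + f t * b).
Proof. intros; apply (is_derive_mult f g); auto. intros; apply Rmult_comm. Qed.

Lemma is_derive_Rplus (f g : R -> R) t a b :
  is_derive f t a -> is_derive g t b -> is_derive (fun s => f s + g s) t (a + b).
Proof. intros; apply (is_derive_plus f g); auto. Qed.

Lemma is_derive_Cmult (f g : R -> C) t a b :
  is_derive f t a -> is_derive g t b ->
  is_derive (fun s => (f s * g s)%C) t (a * g t + f t * b)%C.
Proof.
  rewrite !is_derive_C_iff; intros [Hf1 Hf2] [Hg1 Hg2]; simpl; split.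
  - eapply is_derive_eq; [apply (is_derive_minus (fun s => _ * _) (fun s => _ * _));
      apply is_derive_Rmult; eauto|]. unfold minus, plus, opp; simpl; cbv beta; ring.
  - eapply is_derive_eq; [apply is_derive_Rplus; apply is_derive_Rmult; eauto|]. simpl; ring.
Qed.

Lemma continuous_Cmult (f g : R -> C) y :
  continuous f y -> continuous g y -> continuous (fun s => (f s * g s)%C) y.
Proof.
  rewrite !continuous_C_iff; intros [Hf1 Hf2] [Hg1 Hg2]; simpl; split.
  - apply (continuous_minus (fun s => _ * _) (fun s => _ * _));
      apply (@continuous_mult _ R_AbsRing); auto.
  - apply (continuous_plus (fun s => _ * _) (fun s => _ * _));
      apply (@continuous_mult _ R_AbsRing); auto.
Qed.

Lemma constant_of_derive_zero a b (G : R -> R) :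
  cont_on a b G -> (forall t, a < t < b -> is_derive G t 0) ->
  forall t, a <= t <= b -> G t = G a.
Proof.
  intros HG HD t Ht. assert (Hab : a <= b) by lra.
  rewrite (cont_on_clamp_iff a b G Hab) in HG.
  destruct (MVT_gen (fun s => G (clamp a b s)) a t (fun _ => 0)) as [c [_ Hc]].
  - intros x Hx. rewrite Rmin_left, Rmax_right in Hx by lra.
    apply (is_derive_ext_loc G); [|apply HD; lra].
    apply (locally_interior a b); [lra|]. intros s Hs; rewrite clamp_id; auto.
  - intros x _. apply continuity_pt_filterlim, HG.
  - rewrite !clamp_id in Hc by lra. lra.
Qed.

Lemma sum_squares_constant a b (x1 x2 x3 x4 d1 d2 d3 d4 : R -> R) :
  cont_on a b x1 -> cont_on a b x2 -> cont_on a b x3 -> cont_on a b x4 ->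
  (forall t, a < t < b -> is_derive x1 t (d1 t)) ->
  (forall t, a < t < b -> is_derive x2 t (d2 t)) ->
  (forall t, a < t < b -> is_derive x3 t (d3 t)) ->
  (forall t, a < t < b -> is_derive x4 t (d4 t)) ->
  (forall t, a < t < b -> x1 t * d1 t + x2 t * d2 t + x3 t * d3 t + x4 t * d4 t = 0) ->
  forall t, a <= t <= b ->
  x1 t * x1 t + x2 t * x2 t + x3 t * x3 t + x4 t * x4 t =
  x1 a * x1 a + x2 a * x2 a + x3 a * x3 a + x4 a * x4 a.
Proof.
  intros C1 C2 C3 C4 D1 D2 D3 D4 Horth.
  apply (constant_of_derive_zero a b
           (fun s => x1 s * x1 s + x2 s * x2 s + x3 s * x3 s + x4 s * x4 s)).
  - assert (Hmult : forall f g, cont_on a b f -> cont_on a b g -> cont_on a b (fun s => f s * g s))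
      by (intros f g; apply cont_on_lift2; intros; apply (@continuous_mult _ R_AbsRing); auto).
    assert (Hplus : forall f g, cont_on a b f -> cont_on a b g -> cont_on a b (fun s => f s + g s))
      by (intros f g; apply cont_on_lift2; intros; apply (@continuous_plus _ R_AbsRing R_NormedModule); auto).
    apply Hplus; [apply Hplus; [apply Hplus|]|]; apply Hmult; auto.
  - intros t Ht. eapply is_derive_eq.
    + apply is_derive_Rplus; [apply is_derive_Rplus; [apply is_derive_Rplus|]|];
        apply is_derive_Rmult; auto.
    + specialize (Horth t Ht). lra.
Qed.

Lemma quaternion_norm_conserved a b (b1 b2 b3 x0 x1 x2 x3 : R -> R) :
  cont_on a b x0 -> cont_on a b x1 -> cont_on a b x2 -> cont_on a b x3 ->
  (forall t, a < t < b -> is_derive x0 t (b1 t * x1 t + b2 t * x2 t + b3 t * x3 t)) ->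
  (forall t, a < t < b -> is_derive x1 t (- b1 t * x0 t - b3 t * x2 t + b2 t * x3 t)) ->
  (forall t, a < t < b -> is_derive x2 t (- b2 t * x0 t + b3 t * x1 t - b1 t * x3 t)) ->
  (forall t, a < t < b -> is_derive x3 t (- b3 t * x0 t - b2 t * x1 t + b1 t * x2 t)) ->
  forall t, a <= t <= b ->
  x0 t * x0 t + x1 t * x1 t + x2 t * x2 t + x3 t * x3 t =
  x0 a * x0 a + x1 a * x1 a + x2 a * x2 a + x3 a * x3 a.
Proof.
  intros C0 C1 C2 C3 D0 D1 D2 D3.
  apply (sum_squares_constant a b x0 x1 x2 x3
           (fun t => b1 t * x1 t + b2 t * x2 t + b3 t * x3 t)
           (fun t => - b1 t * x0 t - b3 t * x2 t + b2 t * x3 t)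
           (fun t => - b2 t * x0 t + b3 t * x1 t - b1 t * x3 t)
           (fun t => - b3 t * x0 t - b2 t * x1 t + b1 t * x2 t)); auto.
  intros t _; ring.
Qed.

Lemma is_derive_cexpi (g : R -> R) y dg :
  is_derive g y dg -> is_derive (fun s => cexpi (g s)) y (Ci * RtoC dg * cexpi (g y))%C.
Proof.
  intros Hg. apply is_derive_C_iff; unfold cexpi; simpl; split; eapply is_derive_eq.
  - apply (is_derive_comp cos g); [apply is_derive_cos | exact Hg].
  - unfold scal; simpl; unfold mult; simpl; ring.
  - apply (is_derive_comp sin g); [apply is_derive_sin | exact Hg].
  - unfold scal; simpl; unfold mult; simpl; ring.
Qed.

Definition phase (b0 : R -> R) (t0 t : R) : C := cexpi (- RInt b0 t0 t).

Section Phase.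
Variables (t0 T : R) (b0 : R -> R).
Hypothesis Hle : t0 <= T.
Hypothesis Hb0 : cont_on t0 T b0.

(* The phase agrees on [t0,T] with the phase of the clamped extension of b0,
   which is continuous on R and therefore has a primitive on R. *)
Let b0c (x : R) : R := b0 (clamp t0 T x).

Let phase_c (t : R) : C := cexpi (- RInt b0c t0 t).

Lemma phase_clamp s : t0 <= s <= T -> phase b0 t0 s = phase_c s.
Proof.
  intros Hs. unfold phase, phase_c. rewrite (RInt_ext b0 b0c t0 s); [reflexivity|].
  intros x Hx. rewrite Rmin_left, Rmax_right in Hx by lra.
  unfold b0c; rewrite clamp_id; auto; lra.
Qed.

Lemma phase_c_derive y : is_derive phase_c y (- Ci * RtoC (b0c y) * phase_c y)%C.
Proof.
  assert (Hc : forall x, continuous b0c x) by (apply cont_on_clamp_iff; auto).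
  eapply is_derive_eq; [apply is_derive_cexpi, (is_derive_opp (RInt b0c t0))|].
  - apply (is_derive_RInt b0c (RInt b0c t0) t0 y); [|apply Hc].
    apply filter_forall; intros x. apply (@RInt_correct R_CompleteNormedModule).
    apply (@ex_RInt_continuous R_CompleteNormedModule); intros; apply Hc.
  - apply injective_projections; unfold opp; simpl; ring.
Qed.

Lemma phase_cont : cont_on t0 T (phase b0 t0).
Proof.
  apply (cont_on_of_continuous _ _ _ phase_c); [|exact phase_clamp].
  intros y. destruct (proj1 (is_derive_C_iff _ _ _) (phase_c_derive y)) as [D1 D2].
  apply continuous_C_iff; split;
    [exact (ex_derive_continuous _ _ (ex_intro _ _ D1))
    | exact (ex_derive_continuous _ _ (ex_intro _ _ D2))].
Qed.

Lemma phase_derive t : t0 < t < T ->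
  is_derive (phase b0 t0) t (- Ci * RtoC (b0 t) * phase b0 t0 t)%C.
Proof.
  intros Ht. apply (is_derive_ext_loc phase_c).
  - apply (locally_interior t0 T); [exact Ht|]. intros s Hs; rewrite phase_clamp; auto.
  - replace (b0 t) with (b0c t) by (unfold b0c; rewrite clamp_id; auto; lra).
    rewrite phase_clamp by lra. apply phase_c_derive.
Qed.

End Phase.

Ltac derive_C := repeat match goal with
  | |- is_derive (fun s => Cmult (@?f s) (@?g s)) _ _ => eapply (is_derive_Cmult f g)
  | |- is_derive (fun s => Cplus (@?f s) (@?g s)) _ _ => eapply (is_derive_plus f g)
  | |- is_derive (fun _ => ?c) _ _ => apply (@is_derive_const R_AbsRing C_R_NormedModule c)
  | |- is_derive _ _ _ => eassumption
  end.

Ltac C_ring := apply injective_projections; simpl; unfold plus, zero, opp, minus; simpl;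
  lazymatch goal with |- @eq _ ?x ?y => change (@eq R x y) end; ring.

Ltac cont_C := repeat match goal with
  | |- cont_on _ _ (fun s => Cmult (@?f s) (@?g s)) =>
      apply (cont_on_lift2 _ _ Cmult f g); [exact continuous_Cmult| |]
  | |- cont_on _ _ (fun s => Cplus (@?f s) (@?g s)) =>
      apply (cont_on_lift2 _ _ Cplus f g);
        [exact (@continuous_plus _ R_AbsRing C_R_NormedModule)| |]
  | |- cont_on _ _ (fun _ => ?c) => apply cont_on_const
  | |- cont_on _ _ _ => assumption
  end.

Definition su2_part (u0 u1 u2 u3 : R -> C) (t : R) : M2 :=
  madd2 (mscal2 (u0 t) Id2) (mscal2 Ci (dot_sigma (u1 t) (u2 t) (u3 t))).

Definition formula_propagator (b0 : R -> R) (t0 : R) (u0 u1 u2 u3 : R -> C) (t : R) : M2 :=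
  mscal2 (phase b0 t0 t) (su2_part u0 u1 u2 u3 t).

Section QuaternionSolution.
Variables (t0 T : R) (b0 b1 b2 b3 : R -> R) (u0 u1 u2 u3 : R -> C).
Hypothesis Hb0 : cont_on t0 T b0.
Hypothesis Hqc : forall t, t0 <= t <= T ->
  cont_within t0 T u0 t /\ cont_within t0 T u1 t /\
  cont_within t0 T u2 t /\ cont_within t0 T u3 t.
Hypothesis Hq0 : forall t, t0 < t < T -> is_derive u0 t
  (RtoC (b1 t) * u1 t + RtoC (b2 t) * u2 t + RtoC (b3 t) * u3 t)%C.
Hypothesis Hq1 : forall t, t0 < t < T -> is_derive u1 t
  (- RtoC (b1 t) * u0 t - RtoC (b3 t) * u2 t + RtoC (b2 t) * u3 t)%C.
Hypothesis Hq2 : forall t, t0 < t < T -> is_derive u2 t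
  (- RtoC (b2 t) * u0 t + RtoC (b3 t) * u1 t - RtoC (b1 t) * u3 t)%C.
Hypothesis Hq3 : forall t, t0 < t < T -> is_derive u3 t
  (- RtoC (b3 t) * u0 t - RtoC (b2 t) * u1 t + RtoC (b1 t) * u2 t)%C.
Hypothesis Hinit : u0 t0 = 1%C /\ u1 t0 = 0%C /\ u2 t0 = 0%C /\ u3 t0 = 0%C.

Lemma quaternion_cont :
  cont_on t0 T u0 /\ cont_on t0 T u1 /\ cont_on t0 T u2 /\ cont_on t0 T u3.
Proof. repeat split; intros t Ht; apply (Hqc t Ht). Qed.

(* Since A(t) is real, the real part and the imaginary part of q both solve the
   real quaternion system, so both have constant norm. *)
Lemma quaternion_part_norm (p : C -> R) : p = fst \/ p = snd ->
  forall t, t0 <= t <= T ->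
  p (u0 t) * p (u0 t) + p (u1 t) * p (u1 t) + p (u2 t) * p (u2 t) + p (u3 t) * p (u3 t) =
  p (u0 t0) * p (u0 t0) + p (u1 t0) * p (u1 t0) + p (u2 t0) * p (u2 t0) + p (u3 t0) * p (u3 t0).
Proof.
  intros Hp. destruct quaternion_cont as [C0 [C1 [C2 C3]]].
  apply (quaternion_norm_conserved t0 T b1 b2 b3); try (apply cont_on_part; assumption);
    intros t Ht; (eapply is_derive_eq; [apply is_derive_part; eauto|]);
    destruct Hp as [-> | ->]; simpl; ring.
Qed.

Lemma quaternion_real_unit t : t0 <= t <= T ->
  Im (u0 t) = 0 /\ Im (u1 t) = 0 /\ Im (u2 t) = 0 /\ Im (u3 t) = 0 /\
  Cmod (u0 t) ^ 2 + Cmod (u1 t) ^ 2 + Cmod (u2 t) ^ 2 + Cmod (u3 t) ^ 2 = 1.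
Proof.
  intros Ht.
  pose proof (quaternion_part_norm fst (or_introl eq_refl) t Ht) as Hre.
  pose proof (quaternion_part_norm snd (or_intror eq_refl) t Ht) as Him.
  destruct Hinit as [I0 [I1 [I2 I3]]].
  rewrite I0, I1, I2, I3 in Hre, Him. simpl in Hre, Him.
  rewrite !Cmod2_alt. unfold Re, Im.
  repeat split; nra.
Qed.

Lemma su2_part_derive t : t0 < t < T -> forall i j,
  is_derive (fun s => su2_part u0 u1 u2 u3 s i j) t
    (- Ci * mmul2 (dot_sigma (RtoC (b1 t)) (RtoC (b2 t)) (RtoC (b3 t)))
                  (su2_part u0 u1 u2 u3 t) i j)%C.
Proof.
  intros Ht i j.
  pose proof (Hq0 t Ht). pose proof (Hq1 t Ht). pose proof (Hq2 t Ht). pose proof (Hq3 t Ht).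
  eapply is_derive_eq; [cbv beta delta [su2_part mscal2 madd2 dot_sigma]; derive_C|].
  destruct i, j; unfold su2_part, mmul2, mscal2, madd2, dot_sigma, Id2, sigma1, sigma2, sigma3;
    C_ring.
Qed.

Lemma formula_derive t : t0 < t < T -> forall i j,
  is_derive (fun s => formula_propagator b0 t0 u0 u1 u2 u3 s i j) t
    (- Ci * mmul2 (Ham b0 b1 b2 b3 t) (formula_propagator b0 t0 u0 u1 u2 u3 t) i j)%C.
Proof.
  intros Ht i j.
  eapply is_derive_eq.
  - apply (is_derive_Cmult (phase b0 t0) (fun s => su2_part u0 u1 u2 u3 s i j));
      [apply (phase_derive t0 T); auto; lra | apply su2_part_derive, Ht].
  - unfold formula_propagator.
    generalize (phase b0 t0 t) (su2_part u0 u1 u2 u3 t); intros e W.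
    destruct i; unfold Ham, mmul2, mscal2, madd2, dot_sigma,
      Id2, sigma1, sigma2, sigma3; C_ring.
Qed.

Lemma formula_cont i j : t0 <= T ->
  cont_on t0 T (fun s => formula_propagator b0 t0 u0 u1 u2 u3 s i j).
Proof.
  intros Hle. pose proof (phase_cont t0 T b0 Hle Hb0).
  destruct quaternion_cont as [C0 [C1 [C2 C3]]].
  cbv beta delta [formula_propagator su2_part mscal2 madd2 dot_sigma]. cont_C.
Qed.

Lemma formula_init i j : formula_propagator b0 t0 u0 u1 u2 u3 t0 i j = Id2 i j.
Proof.
  destruct Hinit as [I0 [I1 [I2 I3]]].
  unfold formula_propagator, phase, su2_part, cexpi.
  rewrite RInt_point, I0, I1, I2, I3. change (@zero R_CompleteNormedModule) with 0.
  rewrite Ropp_0, cos_0, sin_0.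
  destruct i, j; unfold mscal2, madd2, dot_sigma, Id2, sigma1, sigma2, sigma3;
    apply injective_projections; simpl; ring.
Qed.

Lemma formula_is_propagator :
  is_propagator (Ham b0 b1 b2 b3) t0 T (formula_propagator b0 t0 u0 u1 u2 u3).
Proof.
  split; [|split].
  - intros t Ht i j. apply formula_cont; lra.
  - exact formula_derive.
  - exact formula_init.
Qed.

End QuaternionSolution.

Definition hermitian (M : M2) : Prop := forall i j, M j i = Cconj (M i j).

Lemma Ham_hermitian b0 b1 b2 b3 t : hermitian (Ham b0 b1 b2 b3 t).
Proof.
  intros i j; destruct i, j; unfold Ham, mscal2, madd2, dot_sigma, Id2, sigma1, sigma2, sigma3;
    apply injective_projections; simpl; ring.
Qed.

(* For Hermitian M, the velocity -i M v of a column v is orthogonal to v in the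
   underlying real inner product, since v* M v is real. *)
Lemma hermitian_column_orthogonal (M V : M2) j : hermitian M ->
  fst (V I1 j) * fst (- Ci * mmul2 M V I1 j)%C + snd (V I1 j) * snd (- Ci * mmul2 M V I1 j)%C +
  fst (V I2 j) * fst (- Ci * mmul2 M V I2 j)%C + snd (V I2 j) * snd (- Ci * mmul2 M V I2 j)%C = 0.
Proof.
  intros HM. unfold mmul2. rewrite (HM I1 I2).
  pose proof (HM I1 I1) as H11. pose proof (HM I2 I2) as H22.
  destruct (M I1 I1) as [p11 q11], (M I2 I2) as [p22 q22], (M I1 I2) as [p12 q12].
  injection H11; injection H22; intros Hq22 Hq11.
  assert (q11 = 0) by lra. assert (q22 = 0) by lra. subst q11 q22.
  simpl; ring.
Qed.

Lemma schrodinger_null a b (H V : R -> M2) :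
  (forall t, a < t < b -> hermitian (H t)) ->
  (forall i j, cont_on a b (fun s => V s i j)) ->
  (forall t, a < t < b -> forall i j,
     is_derive (fun s => V s i j) t (- Ci * mmul2 (H t) (V t) i j)%C) ->
  (forall i j, V a i j = 0%C) ->
  forall t, a <= t <= b -> forall i j, V t i j = 0%C.
Proof.
  intros HH HC HD H0 t Ht i j.
  set (dV := fun s k => (- Ci * mmul2 (H s) (V s) k j)%C).
  assert (Hnorm : fst (V t I1 j) * fst (V t I1 j) + snd (V t I1 j) * snd (V t I1 j) +
                  fst (V t I2 j) * fst (V t I2 j) + snd (V t I2 j) * snd (V t I2 j) = 0).
  { erewrite (sum_squares_constant a b
      (fun s => fst (V s I1 j)) (fun s => snd (V s I1 j))
      (fun s => fst (V s I2 j)) (fun s => snd (V s I2 j))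
      (fun s => fst (dV s I1)) (fun s => snd (dV s I1))
      (fun s => fst (dV s I2)) (fun s => snd (dV s I2))); try exact Ht.
    - rewrite !H0; simpl; ring.
    - apply cont_on_part; auto.
    - apply cont_on_part; auto.
    - apply cont_on_part; auto.
    - apply cont_on_part; auto.
    - intros s Hs; apply is_derive_part; auto.
    - intros s Hs; apply is_derive_part; auto.
    - intros s Hs; apply is_derive_part; auto.
    - intros s Hs; apply is_derive_part; auto.
    - intros s Hs; apply hermitian_column_orthogonal, HH, Hs. }
  destruct i; apply injective_projections; simpl; nra.
Qed.

Lemma propagator_unique a b (H U1 U2 : R -> M2) :
  (forall t, a < t < b -> hermitian (H t)) ->
  is_propagator H a b U1 -> is_propagator H a b U2 ->
  forall t, a <= t <= b -> forall i j, U1 t i j = U2 t i j.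
Proof.
  intros HH [C1 [D1 Init1]] [C2 [D2 Init2]] t Ht i j.
  assert (E : (U1 t i j - U2 t i j)%C = 0%C).
  { apply (schrodinger_null a b H (fun s k l => (U1 s k l - U2 s k l)%C)); auto.
    - intros k l. apply (cont_on_lift2 a b Cminus);
        [exact (@continuous_minus _ R_AbsRing C_R_NormedModule)| |];
        intros s Hs; [apply C1 | apply C2]; auto.
    - intros s Hs k l. eapply is_derive_eq.
      + apply (is_derive_minus (fun s => U1 s k l) (fun s => U2 s k l)); [apply D1 | apply D2]; auto.
      + unfold mmul2; C_ring.
    - intros k l. rewrite Init1, Init2. C_ring. }
  apply injective_projections; [apply (f_equal fst) in E | apply (f_equal snd) in E];
    simpl in E; lra.
Qed.

Theorem theorem2 (t0 T : R) (b0 b1 b2 b3 : R -> R)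
  (u0 u1 u2 u3 : R -> C)
  (Hb0 : forall t, t0 <= t <= T -> cont_within t0 T b0 t)
  (Hb1 : forall t, t0 <= t <= T -> cont_within t0 T b1 t)
  (Hb2 : forall t, t0 <= t <= T -> cont_within t0 T b2 t)
  (Hb3 : forall t, t0 <= t <= T -> cont_within t0 T b3 t)
  (Hqc : forall t, t0 <= t <= T ->
     cont_within t0 T u0 t /\ cont_within t0 T u1 t /\
     cont_within t0 T u2 t /\ cont_within t0 T u3 t)
  (Hq0 : forall t, t0 < t < T -> is_derive u0 t
     (RtoC (b1 t) * u1 t + RtoC (b2 t) * u2 t + RtoC (b3 t) * u3 t)%C)
  (Hq1 : forall t, t0 < t < T -> is_derive u1 t
     (- RtoC (b1 t) * u0 t - RtoC (b3 t) * u2 t + RtoC (b2 t) * u3 t)%C)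
  (Hq2 : forall t, t0 < t < T -> is_derive u2 t
     (- RtoC (b2 t) * u0 t + RtoC (b3 t) * u1 t - RtoC (b1 t) * u3 t)%C)
  (Hq3 : forall t, t0 < t < T -> is_derive u3 t
     (- RtoC (b3 t) * u0 t - RtoC (b2 t) * u1 t + RtoC (b1 t) * u2 t)%C)
  (Hinit : u0 t0 = 1%C /\ u1 t0 = 0%C /\ u2 t0 = 0%C /\ u3 t0 = 0%C) :
  let UF : R -> M2 := fun t =>
    mscal2 (cexpi (- RInt b0 t0 t))
      (madd2 (mscal2 (u0 t) Id2) (mscal2 Ci (dot_sigma (u1 t) (u2 t) (u3 t)))) in
  (forall t, t0 <= t <= T ->
     Im (u0 t) = 0 /\ Im (u1 t) = 0 /\ Im (u2 t) = 0 /\ Im (u3 t) = 0 /\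
     Cmod (u0 t) ^ 2 + Cmod (u1 t) ^ 2 + Cmod (u2 t) ^ 2 + Cmod (u3 t) ^ 2 = 1) /\
  is_propagator (Ham b0 b1 b2 b3) t0 T UF /\
  (forall U : R -> M2, is_propagator (Ham b0 b1 b2 b3) t0 T U ->
     forall t, t0 <= t <= T -> forall i j, U t i j = UF t i j).
Proof.
  intros UF.
  assert (HUF : is_propagator (Ham b0 b1 b2 b3) t0 T UF)
    by exact (formula_is_propagator t0 T b0 b1 b2 b3 u0 u1 u2 u3 Hb0 Hqc Hq0 Hq1 Hq2 Hq3 Hinit).
  split; [|split; [exact HUF|]].
  - exact (quaternion_real_unit t0 T b1 b2 b3 u0 u1 u2 u3 Hqc Hq0 Hq1 Hq2 Hq3 Hinit).
  - intros U HU. apply (propagator_unique t0 T (Ham b0 b1 b2 b3)); auto.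
    intros t _; apply Ham_hermitian.
Qed.
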